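(* Let $n\ge3$ and $q\ge2$ with $q-1\le\lfloor n/2\rfloor$, and let $m_1<\cdots<m_t$ be the minimal monomial generators of $I(C_n)^{[q-1]}$, listed in the order described in the context. Then for all $j<i$, either $(m_j:m_i)\subseteq (I(C_n)^{[q]}:m_i)$, or there exists $r<i$ such that $(m_r:m_i)$ is generated by a single variable and $(m_j:m_i)\subseteq (m_r:m_i)$.
   Context: $C_n$ is the cycle on $x_1,\dots,x_n$ with edges $\{x_i,x_{i+1}\}$ ($1\le i\le n-1$) and $\{x_1,x_n\}$; $I(C_n)$ is its edge ideal in $\mathbb{K}[x_1,\dots,x_n]$, and $I(C_n)^{[q]}$ is the ideal generated by the monomials $\prod_{v\in e_1\cup\dots\cup e_q}v$ for matchings $\{e_1,\dots,e_q\}$ of $C_n$ (zero if no such matching exists). For monomial ideals/monomials, $(I:f)=\{g: gf\in I\}$. Ordering: edges are ordered $\{x_1,x_2\}<\{x_2,x_3\}<\cdots<\{x_{n-1},x_n\}<\{x_1,x_n\}$. For a matching $M$ of size $q-1$, let $e(M)$ be the sequence of its edges in increasing order; matchings are compared by the lexicographic order on these sequences. Each minimal generator $m$ of $I(C_n)^{[q-1]}$ is associated with the lexicographically smallest matching $M$ whose product of covered vertices is $m$, and generators are ordered by the lexicographic order of the associated sequences $e(M)$. *)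

(* Squarefree monomial ideals of K[x_1..x_n] are represented
   by the set of monomials they contain (exponent vectors 'I_n -> nat);
   vertex x_(k+1) is the index k : 'I_n. *)
From mathcomp Require Import all_boot.
Set Implicit Arguments. Unset Strict Implicit. Unset Printing Implicit Defensive.

Definition mon (n : nat) := {ffun 'I_n -> nat}.

Definition mmul n (u v : mon n) : mon n := [ffun k => u k + v k].
Definition mdvd n (u v : mon n) : bool := [forall k, u k <= v k].
Definition mvar n (k : 'I_n) : mon n := [ffun j => nat_of_bool (j == k)].

Definition mset n := mon n -> Prop.
Definition gen_ideal n (G : mset n) : mset n :=
  fun u => exists2 g, G g & mdvd g u.
Definition principal n (f : mon n) : mset n := gen_ideal (fun g => g = f).
Definition colon n (J : mset n) (f : mon n) : mset n := fun u => J (mmul u f).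
Definition msubset n (A B : mset n) : Prop := forall u, A u -> B u.
Definition min_gens n (G : mset n) : mset n :=
  fun g => G g /\ forall g', G g' -> mdvd g' g -> g' = g.

(* The cycle C_n: edge i (i = 0..n-1) is {x_(i+1), x_(i+2)}, and edge n-1 is
   {x_n, x_1}; the edge order is the order of the indices i. *)
Definition edge n (i : 'I_n) : {set 'I_n} :=
  [set j : 'I_n | (val j == val i) || (val j == (val i).+1 %% n)].
Definition is_matching n (M : {set 'I_n}) : bool :=
  [forall i in M, forall j in M, (i != j) ==> [disjoint edge i & edge j]].
Definition cover n (M : {set 'I_n}) : {set 'I_n} := \bigcup_(i in M) edge i.
Definition mono n (M : {set 'I_n}) : mon n := [ffun k => nat_of_bool (k \in cover M)].

Definition matching_gens (n q : nat) : mset n :=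
  fun u => exists M : {set 'I_n}, [/\ is_matching M, #|M| = q & u = mono M].
Arguments matching_gens : clear implicits.
Definition Iq (n q : nat) : mset n := gen_ideal (matching_gens n q).
Arguments Iq : clear implicits.

Definition eseq n (M : {set 'I_n}) : seq nat := sort leq (map val (enum M)).
Fixpoint lex_lt (s t : seq nat) : bool :=
  match s, t with
  | [::], [::] => false
  | [::], _ :: _ => true
  | _ :: _, [::] => false
  | a :: s', b :: t' => (a < b) || ((a == b) && lex_lt s' t')
  end.
Definition lex_le s t := (s == t) || lex_lt s t.

Definition lexmin_rep (n p : nat) (m : mon n) (M : {set 'I_n}) : Prop :=
  [/\ is_matching M, #|M| = p, mono M = m &
      forall M' : {set 'I_n}, is_matching M' -> #|M'| = p -> mono M' = m ->
        lex_le (eseq M) (eseq M')].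

Arguments lexmin_rep : clear implicits.

Definition gen_lt (n p : nat) (m m' : mon n) : Prop :=
  exists M M', [/\ lexmin_rep n p m M, lexmin_rep n p m' M' & lex_lt (eseq M) (eseq M')].
Arguments gen_lt : clear implicits.

From Pilot Require Import Defs.
From mathcomp Require Import all_boot all_order zify.
(* Re-import Defs so that [cover] is not finset's. *)
Import Defs Order.TTheory.
Set Implicit Arguments. Unset Strict Implicit. Unset Printing Implicit Defensive.

(** Index the vertices and the edges of C_n by 'I_n, edge i joining i and i+1 (mod n), and
    let Mi, Mj be the lexicographically least matchings behind m_i and m_j, so Mj <lex Mi.
    If an edge of Mj misses every vertex covered by Mi, adding it to Mi gives a generator of
    I(C_n)^[q] dividing u m_i whenever m_j divides u m_i.  Otherwise it suffices to find a
    vertex k covered by Mj but not by Mi and a matching Mr <lex Mi of the same size that covers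
    k and otherwise only vertices covered by Mi: then (m_r : m_i) = (x_k) contains (m_j : m_i).
    If some edge b < n-1 of Mj has its vertex b uncovered by Mi, then edge b+1 lies in Mi and Mr
    trades it for b.  Otherwise the first edge where Mj and Mi differ is edge 0 of Mj, Mi
    contains edge n-1, and counting shows that for every edge a of Mi, a or a+1 is in Mj.  With
    k the least vertex not covered by Mi, Mi then contains the edges n-1, 1, 3, ..., k-2 and Mj
    the edges 0, 2, ..., k-1; Mr moves those edges of Mi one step forward. *)

Section CycleMatchings.
Variable n : nat.
Hypothesis n_gt1 : 1 < n.
Implicit Types (i j v x : 'I_n) (M : {set 'I_n}).

Lemma ordS_lt i : i.+1 < n -> (ordS i : nat) = i.+1.
Proof. by move=> lt_in; rewrite /= modn_small. Qed.

Lemma ordS_last i : i.+1 = n -> (ordS i : nat) = 0.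
Proof. by move=> def_n; rewrite /= def_n modnn. Qed.

Lemma ord_pred_gt0 x : 0 < x -> (ord_pred x : nat) = x.-1.
Proof. by case: x => [[|i] lt_in] //= _; rewrite modnDr modn_small // ltnW. Qed.

Lemma in_edge i v : (v \in edge i) = (v == i) || (v == ordS i).
Proof. by rewrite inE. Qed.

Lemma edge_self i : i \in edge i.
Proof. by rewrite in_edge eqxx. Qed.

Lemma edge_ordS i : ordS i \in edge i.
Proof. by rewrite in_edge eqxx orbT. Qed.

Lemma edge_ord_pred i v : v \in edge (ordS i) -> ord_pred v \in edge i.
Proof. by rewrite !in_edge => /orP[]/eqP->; rewrite ordSK eqxx ?orbT. Qed.

Lemma ordS_neq i : ordS i != i.
Proof.
apply/eqP => /(congr1 (@nat_of_ord n)); have := ltn_ord i; rewrite leq_eqVlt.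
by case/orP => [/eqP i_last | lt_in]; [rewrite ordS_last | rewrite ordS_lt]; lia.
Qed.

Lemma matchingP M :
  reflect (forall i j v, i \in M -> j \in M -> v \in edge i -> v \in edge j -> i = j)
          (is_matching M).
Proof.
apply: (iffP forallP) => [mM i j v iM jM vi vj | mM i].
  have /forall_inP/(_ j jM) := implyP (mM i) iM.
  by case: eqP => // _ /disjointFr/(_ vi); rewrite vj.
apply/implyP => iM; apply/forall_inP => j jM; apply/implyP => /eqP neq_ij.
by rewrite disjoint_subset; apply/subsetP => v vi; apply/negP => vj; apply: neq_ij (mM i j v _ _ _ _).
Qed.

Lemma matching_ordS M i : is_matching M -> i \in M -> ordS i \notin M.
Proof.
move=> /matchingP mM iM; apply/negP => sM.
by have /eqP[] := ordS_neq i; apply: mM sM iM (edge_self _) (edge_ordS _).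
Qed.

Lemma matchingS M M' : M' \subset M -> is_matching M -> is_matching M'.
Proof. by move=> /subsetP sM /matchingP mM; apply/matchingP => i j v /sM iM /sM; apply: mM. Qed.

Lemma coverP M v : reflect (exists2 i, i \in M & v \in edge i) (v \in cover M).
Proof. exact: bigcupP. Qed.

Lemma mem_cover M i v : i \in M -> v \in edge i -> v \in cover M.
Proof. by move=> iM vi; apply/coverP; exists i. Qed.

Lemma matchingU1 M b : is_matching M ->
  b \notin cover M -> ordS b \notin cover M -> is_matching (b |: M).
Proof.
move=> /matchingP mM bM sbM; apply/matchingP => i j v.
have outM k : k \in M -> v \in edge b -> v \in edge k -> False.
  by move=> kM; rewrite in_edge => /orP[]/eqP-> /(mem_cover kM); apply/negP.
rewrite !in_setU1 => /predU1P[->|iM] /predU1P[->|jM] vi vj //.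
- by case: (outM j jM vi vj).
- by case: (outM i iM vj vi).
- exact: mM vi vj.
Qed.

Lemma cover_ordS_mem M x : ordS x \in cover M -> x \notin M -> ordS x \in M.
Proof.
case/coverP=> i iM; rewrite in_edge => /orP[/eqP-> //|/eqP/ordS_inj->].
by rewrite iM.
Qed.

Lemma card_cover M : is_matching M -> #|cover M| = 2 * #|M|.
Proof.
move=> mM; have -> : cover M = M :|: [set ordS i | i in M].
  apply/setP => v; rewrite inE; apply/coverP/orP => [[i iM]|].
    by rewrite in_edge => /orP[]/eqP->; [left | right; apply: imset_f].
  by case=> [vM|/imsetP[i iM ->]]; [exists v | exists i]; rewrite ?edge_self ?edge_ordS.
rewrite cardsU card_imset; last exact: ordS_inj.
suff -> : M :&: [set ordS i | i in M] = set0 by rewrite cards0 subn0 addnn -mul2n.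
apply/setP => v; rewrite !inE; apply/andP => -[vM /imsetP[i iM def_v]].
by move: vM; rewrite def_v; apply/negP/matching_ordS.
Qed.

End CycleMatchings.

Lemma lex_ltE s t : lex_lt s t = ((s : seqlexi nat) < t)%O.
Proof.
elim: s t => [|a s IHs] [|b t] //=; rewrite ltxi_cons IHs /Order.le /=.
by case: ltngtP.
Qed.

Lemma lex_leE s t : lex_le s t = ((s : seqlexi nat) <= t)%O.
Proof. by rewrite /lex_le lex_ltE le_eqVlt. Qed.

Lemma path_ltn_notin x s c : path ltn x s -> c <= x -> c \notin s.
Proof. by move=> /(order_path_min ltn_trans)/allP s_gt le_cx; apply/negP => /s_gt; lia. Qed.

Lemma lex_lt_first s t : sorted ltn s -> sorted ltn t -> size s = size t -> lex_lt s t ->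
  exists b, [/\ b \in s, b \notin t, (forall c, c < b -> (c \in s) = (c \in t))
              & exists2 a, a \in t & b < a].
Proof.
elim: s t => [|x s IHs] [|y t] //= s_x t_y [/IHs {}IHs].
case/orP => [lt_xy | /andP[/eqP eq_xy /(IHs (path_sorted s_x) (path_sorted t_y))]].
  exists x; split; first exact: mem_head.
  - by rewrite in_cons negb_or neq_ltn lt_xy (path_ltn_notin t_y) // ltnW.
  - move=> c lt_cx; have lt_cy := ltn_trans lt_cx lt_xy.
    rewrite !in_cons !ltn_eqF //.
    rewrite (negbTE (path_ltn_notin s_x (ltnW lt_cx))).
    by rewrite (negbTE (path_ltn_notin t_y (ltnW lt_cy))).
  by exists y; rewrite ?mem_head.
subst y => -[b [bs bt b_min [a at_ lt_ba]]].
have lt_xb : x < b by move: s_x => /(order_path_min ltn_trans)/allP; apply.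
exists b; split; rewrite ?in_cons ?bs ?orbT //.
- by rewrite negb_or bt gtn_eqF.
- by move=> c lt_cb; rewrite !in_cons b_min.
by exists a; rewrite ?in_cons ?at_ ?orbT.
Qed.

Lemma lex_lt_of_first s t b : sorted ltn s -> sorted ltn t -> b \in s -> b \notin t ->
  (forall c, c < b -> (c \in s) = (c \in t)) -> (exists2 a, a \in t & b < a) -> lex_lt s t.
Proof.
elim: s t => [|x s IHs] [|y t] //= s_x t_y bs bt b_min [a at_ lt_ba] //.
have le_xb : x <= b.
  move: bs; rewrite in_cons => /predU1P[->//|].
  by move: s_x => /(order_path_min ltn_trans)/allP s_gt /s_gt/ltnW.
case: (ltngtP x y) => [//|lt_yx|eq_xy] /=.
  have := b_min y (leq_trans lt_yx le_xb); rewrite mem_head in_cons ltn_eqF //.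
  by rewrite (negbTE (path_ltn_notin s_x (ltnW lt_yx))).
subst y; have neq_bx : b != x by apply: contraNneq bt => ->; apply: mem_head.
move: bs bt; rewrite !in_cons (negbTE neq_bx) /= => bs bt.
apply: (IHs t (path_sorted s_x) (path_sorted t_y) bs bt).
- move=> c lt_cb; have := b_min c lt_cb; rewrite !in_cons; case: eqP => [->|] //= _.
  by rewrite (negbTE (path_ltn_notin s_x _)) ?(negbTE (path_ltn_notin t_y _)).
- exists a => //; move: at_; rewrite in_cons => /predU1P[eq_ax|//]; lia.
Qed.

Section LexOrderOnMatchings.
Variable n : nat.
Implicit Types (A B M : {set 'I_n}).

Lemma eseq_sorted M : sorted ltn (eseq M).
Proof.
rewrite /eseq ltn_sorted_uniq_leq sort_uniq (sort_sorted leq_total) andbT.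
by rewrite map_inj_uniq ?enum_uniq //; apply: val_inj.
Qed.

Lemma mem_eseq M (i : 'I_n) : ((i : nat) \in eseq M) = (i \in M).
Proof. by rewrite mem_sort (mem_map val_inj) mem_enum. Qed.

Lemma eseq_ltn M x : x \in eseq M -> x < n.
Proof. by rewrite mem_sort => /mapP[i _ ->]; apply: ltn_ord. Qed.

Lemma size_eseq M : size (eseq M) = #|M|.
Proof. by rewrite size_sort size_map -cardE. Qed.

Lemma lex_lt_eseq_first A B : #|A| = #|B| -> lex_lt (eseq A) (eseq B) ->
  exists b : 'I_n, [/\ b \in A, b \notin B, (forall c : 'I_n, c < b -> (c \in A) = (c \in B))
                    & exists2 a : 'I_n, a \in B & b < a].
Proof.
move=> cardAB /(lex_lt_first (eseq_sorted A) (eseq_sorted B)).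
rewrite !size_eseq => /(_ cardAB)[b [bA bB b_min [a aB lt_ba]]].
exists (Ordinal (eseq_ltn bA)); rewrite -!mem_eseq; split => //.
  by move=> c lt_cb; rewrite -!mem_eseq b_min.
by exists (Ordinal (eseq_ltn aB)); rewrite -?mem_eseq.
Qed.

Lemma lex_lt_eseq_of_first A B (b : 'I_n) : b \in A -> b \notin B ->
  (forall c : 'I_n, c < b -> (c \in A) = (c \in B)) -> (exists2 a : 'I_n, a \in B & b < a) ->
  lex_lt (eseq A) (eseq B).
Proof.
rewrite -!mem_eseq => bA bB b_min [a aB lt_ba].
apply: (lex_lt_of_first (eseq_sorted A) (eseq_sorted B) bA bB).
  move=> c lt_cb; have lt_cn := ltn_trans lt_cb (ltn_ord b).
  by rewrite -[c]/(Ordinal lt_cn : nat) !mem_eseq b_min.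
by exists (a : nat); rewrite ?mem_eseq.
Qed.

Lemma lexmin_rep_exists p M : is_matching M -> #|M| = p ->
  exists2 M', lexmin_rep n p (mono M) M' & lex_le (eseq M') (eseq M).
Proof.
move=> mM cardM.
pose P X := [&& is_matching X, #|X| == p & mono X == mono M].
have PM : P M by rewrite /P mM cardM !eqxx.
case: (arg_minP (fun X => eseq X : seqlexi nat) PM) => M' /and3P[mM' /eqP cardM' /eqP eM'] min.
exists M'; last by rewrite lex_leE min.
by split=> // X mX cardX eX; rewrite lex_leE min // /P mX cardX eX !eqxx.
Qed.

End LexOrderOnMatchings.

Lemma colon_principalP n (m f u : mon n) :
  colon (principal m) f u <-> forall k, m k <= u k + f k.
Proof.
split=> [[_ -> /forallP dvd_m] k | le_m]; first by have := dvd_m k; rewrite ffunE.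
by exists m => //; apply/forallP => k; rewrite ffunE.
Qed.

Lemma mono_subset n (M1 M2 : {set 'I_n}) :
  mdvd (mono M1) (mono M2) -> cover M1 \subset cover M2.
Proof.
move=> /forallP dvd12; apply/subsetP => v v1.
by have := dvd12 v; rewrite !ffunE v1; case: (v \in cover M2).
Qed.

Lemma min_gens_mono n p (M : {set 'I_n}) : 1 < n -> is_matching M -> #|M| = p ->
  min_gens (matching_gens n p) (mono M).
Proof.
move=> n_gt1 mM cardM; split=> [|_ [M' [mM' cardM' ->]] /mono_subset sub]; first by exists M.
have eq_cover : cover M' = cover M.
  by apply/eqP; rewrite eqEcard sub !card_cover // cardM cardM' leqnn.
by rewrite /mono eq_cover.
Qed.

Lemma colon_Iq_free_edge n q (Mi Mj : {set 'I_n}) (b : 'I_n) :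
  is_matching Mi -> #|Mi| = q.-1 -> 0 < q ->
  b \in Mj -> b \notin cover Mi -> ordS b \notin cover Mi ->
  msubset (colon (principal (mono Mj)) (mono Mi)) (colon (Iq n q) (mono Mi)).
Proof.
move=> mMi cardMi q_gt0 bMj b_free sb_free u /colon_principalP dvd_j.
have bMi : b \notin Mi by apply: contra b_free => bMi; apply: mem_cover bMi (edge_self b).
exists (mono (b |: Mi)).
  exists (b |: Mi); split => //; first exact: matchingU1.
  by rewrite cardsU1 bMi cardMi; lia.
apply/forallP => v; rewrite !ffunE.
case vMi: (v \in cover Mi); first by case: (_ \in _); rewrite /= ?addn1.
case/boolP: (v \in cover (b |: Mi)) => //= /coverP[i]; rewrite in_setU1.
case/predU1P => [-> vb | iMi /(mem_cover iMi)]; last by rewrite vMi.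
by have := dvd_j v; rewrite !ffunE vMi (mem_cover bMj vb) addn0.
Qed.

Definition var_colon_witness n p (mj mi : mon n) : Prop :=
  exists mr : mon n,
    [/\ min_gens (matching_gens n p) mr, gen_lt n p mr mi,
        (exists k : 'I_n, forall u, colon (principal mr) mi u <-> principal (mvar k) u) &
        msubset (colon (principal mj) mi) (colon (principal mr) mi)].
Arguments var_colon_witness : clear implicits.

Definition lower_matching n (Mi : {set 'I_n}) (k : 'I_n) (Mr : {set 'I_n}) : Prop :=
  [/\ is_matching Mr, #|Mr| = #|Mi|, lex_lt (eseq Mr) (eseq Mi), k \in cover Mr
    & cover Mr \subset k |: cover Mi].

Lemma var_colon_witness_lower n p (Mi Mj Mr : {set 'I_n}) (k : 'I_n) : 1 < n ->
  lexmin_rep n p (mono Mi) Mi -> lower_matching Mi k Mr ->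
  k \in cover Mj -> k \notin cover Mi -> var_colon_witness n p (mono Mj) (mono Mi).
Proof.
move=> n_gt1 lexMi [mMr cardMr lt_ri kMr /subsetP sub_r] kMj kMi.
have [_ cardMi _ _] := lexMi; rewrite cardMi in cardMr.
have colon_r u : colon (principal (mono Mr)) (mono Mi) u <-> 0 < u k.
  rewrite colon_principalP; split=> [/(_ k)|u_k v].
    by rewrite !ffunE kMr (negbTE kMi) addn0.
  rewrite !ffunE; case/boolP: (v \in cover Mr) => //= /sub_r; rewrite in_setU1.
  by case/predU1P => [->|->]; rewrite ?(negbTE kMi) ?addn0 ?addn1.
exists (mono Mr); split.
- exact: min_gens_mono.
- have [Mr' lexMr' le_r] := lexmin_rep_exists mMr cardMr.
  exists Mr', Mi; split => //; move: le_r lt_ri; rewrite lex_leE !lex_ltE.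
  exact: le_lt_trans.
- exists k => u; rewrite colon_r; split => [u_k|[_ -> /forallP/(_ k)]]; last by rewrite ffunE eqxx.
  by exists (mvar k) => //; apply/forallP => v; rewrite ffunE; case: eqP => [->|].
- by move=> u /colon_principalP/(_ k); rewrite colon_r !ffunE kMj (negbTE kMi) addn0.
Qed.

Lemma lower_matching_swap n (Mi : {set 'I_n}) (b : 'I_n) : is_matching Mi ->
  b \notin cover Mi -> ordS b \in cover Mi -> b.+1 < n ->
  lower_matching Mi b (b |: (Mi :\ ordS b)).
Proof.
move=> mMi b_free sb_cov lt_bn.
have bMi : b \notin Mi by apply: contra b_free => bMi; apply: mem_cover bMi (edge_self b).
have sbMi : ordS b \in Mi := cover_ordS_mem sb_cov bMi.
have lt_b_sb : b < ordS b by rewrite ordS_lt.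
split.
- apply: matchingU1; first exact: matchingS (subD1set _ _) mMi.
    by apply: contra b_free => /coverP[i /setD1P[_ iMi] bi]; apply: mem_cover iMi bi.
  apply/coverP => -[i /setD1P[neq_i iMi] sbi]; move/eqP: neq_i; apply.
  by move/matchingP: mMi => /(_ i _ _ iMi sbMi sbi (edge_self _)).
- by rewrite cardsU1 in_setD1 (negbTE bMi) andbF (cardsD1 (ordS b) Mi) sbMi.
- apply: (lex_lt_eseq_of_first (b := b)); rewrite ?setU11 //; last by exists (ordS b).
  move=> c lt_cb; rewrite in_setU1 in_setD1 -!val_eqE /=.
  by rewrite !ltn_eqF // (ltn_trans lt_cb lt_b_sb).
- by apply: mem_cover (setU11 _ _) (edge_self b).
apply/subsetP => v /coverP[i]; rewrite in_setU1 in_setD1 => /predU1P[->|/andP[_ iMi] vi].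
  by rewrite in_edge in_setU1 => /orP[]/eqP->; rewrite ?eqxx ?sb_cov ?orbT.
by rewrite in_setU1 (mem_cover iMi vi) orbT.
Qed.

Section WrapAround.
Variables (n : nat) (Mi Mj : {set 'I_n}) (x0 xL k : 'I_n).
Hypotheses (n_gt1 : 1 < n) (mMi : is_matching Mi) (mMj : is_matching Mj).
Hypotheses (x0_val : (x0 : nat) = 0) (xL_succ : ordS xL = x0).
Hypotheses (x0Mj : x0 \in Mj) (xLMi : xL \in Mi).
Hypothesis Mi_sub_left : forall a, a \in Mi -> (a \in Mj) || (ordS a \in Mj).
Hypotheses (k_free : k \notin cover Mi) (below_k : forall v : 'I_n, v < k -> v \in cover Mi).

Lemma wrap_even_prefix (w : 'I_n) : ~~ odd w -> w < k -> w \in Mj /\ ord_pred w \in Mi.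
Proof.
suff prefix j : forall w : 'I_n, (w : nat) = j.*2 -> w < k -> w \in Mj /\ ord_pred w \in Mi.
  by move=> even_w; apply: (prefix w./2); rewrite -[LHS]odd_double_half (negbTE even_w).
elim: j => [|j IHj] {}w val_w lt_wk.
  have -> : w = x0 by apply: val_inj; rewrite /= val_w x0_val.
  by rewrite -[in ord_pred _]xL_succ ordSK.
set u := ord_pred w; set w' := ord_pred u.
have succ_u : ordS u = w := ord_predK w.
have succ_w' : ordS w' = u := ord_predK u.
have val_u : (u : nat) = j.*2.+1 by rewrite ord_pred_gt0 val_w.
have val_w' : (w' : nat) = j.*2 by rewrite ord_pred_gt0 val_u.
have [w'Mj pw'Mi] : w' \in Mj /\ ord_pred w' \in Mi by apply: IHj; lia.
have uMi : u \in Mi.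
  rewrite -succ_w'; apply: cover_ordS_mem; first by rewrite succ_w'; apply: below_k; lia.
  by have := matching_ordS n_gt1 mMi pw'Mi; rewrite ord_predK.
split=> //; rewrite -succ_u.
have := matching_ordS n_gt1 mMj w'Mj; rewrite succ_w' => /negbTE uMj.
by have := Mi_sub_left uMi; rewrite uMj.
Qed.

Lemma wrap_xL_last : xL.+1 = n.
Proof.
have := ltn_ord xL; rewrite leq_eqVlt => /orP[/eqP // | lt_xn].
by have := congr1 (@nat_of_ord n) xL_succ; rewrite ordS_lt // x0_val.
Qed.

Lemma wrap_k_gt0 : 0 < k.
Proof.
rewrite lt0n; apply: contraNneq k_free => k0; have -> : k = x0 by apply: val_inj; rewrite /= k0.
by rewrite -xL_succ; apply: mem_cover xLMi (edge_ordS xL).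
Qed.

Lemma wrap_k_odd : odd k.
Proof.
have k_gt0 := wrap_k_gt0.
apply: contraNT k_free => even_k.
have k_gt1 : 1 < k by move: k_gt0 even_k; case: (nat_of_ord k) => [|[]].
set w := ord_pred (ord_pred k).
have val_pk : (ord_pred k : nat) = k.-1 by rewrite ord_pred_gt0.
have val_w : (w : nat) = k.-2 by rewrite ord_pred_gt0 val_pk // -subn1; lia.
have [_ pwMi] : w \in Mj /\ ord_pred w \in Mi.
  apply: wrap_even_prefix; last by rewrite val_w; lia.
  have def_k : (k : nat) = k.-2.+2 by lia.
  by move: even_k; rewrite val_w def_k /= negbK.
have succ_w : ordS w = ord_pred k := ord_predK _.
have swMi : ordS w \in Mi.
  apply: cover_ordS_mem; first by rewrite succ_w; apply: below_k; lia.
  by have := matching_ordS n_gt1 mMi pwMi; rewrite ord_predK.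
by rewrite -(ord_predK k) -succ_w; apply: mem_cover swMi (edge_ordS _).
Qed.

Lemma wrap_last_even : ord_pred k \in Mj /\ ord_pred (ord_pred k) \in Mi.
Proof.
have k_gt0 := wrap_k_gt0.
apply: wrap_even_prefix; rewrite ord_pred_gt0 //; last by lia.
have def_k : (k : nat) = k.-1.+1 by lia.
by move: wrap_k_odd; rewrite def_k.
Qed.

Lemma wrap_k_in_cover_Mj : k \in cover Mj.
Proof. by rewrite -(ord_predK k); apply: mem_cover wrap_last_even.1 (edge_ordS _). Qed.

Let shifted (i : 'I_n) := ordS i < k.
Let phi (i : 'I_n) := if shifted i then ordS i else i.

Lemma wrap_shifted_le i v : shifted i -> v \in edge (ordS i) -> v <= k.
Proof.
rewrite /shifted in_edge => lt_sk /orP[]/eqP->; first exact: ltnW.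
by rewrite ordS_lt //; have := ltn_ord k; lia.
Qed.

Lemma wrap_unshifted_gt i v : i \in Mi -> ~~ shifted i -> v \in edge i -> k < v.
Proof.
move=> iMi; rewrite /shifted -leqNgt => le_k_si vi.
have off_k u : u \in edge i -> (u : nat) != k.
  by move=> ui; rewrite val_eqE; apply: contraNneq k_free => <-; apply: mem_cover iMi ui.
have le_ki : k <= i.
  have := ltn_ord i; rewrite leq_eqVlt => /orP[/eqP i_last | lt_in].
    by have := ltn_ord k; lia.
  by move: le_k_si (off_k _ (edge_ordS i)); rewrite ordS_lt //; lia.
rewrite ltn_neqAle eq_sym off_k //=.
by move: vi; rewrite in_edge => /orP[]/eqP->.
Qed.

Lemma wrap_phi_edge_inj i j v : i \in Mi -> j \in Mi ->
  v \in edge (phi i) -> v \in edge (phi j) -> i = j.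
Proof.
have /matchingP disjMi := mMi; move=> iMi jMi; rewrite /phi.
case: ifP => sh_i; case: ifP => sh_j vi vj.
- exact: disjMi (edge_ord_pred vi) (edge_ord_pred vj).
- by have := wrap_shifted_le sh_i vi; have := wrap_unshifted_gt jMi (negbT sh_j) vj; lia.
- by have := wrap_shifted_le sh_j vj; have := wrap_unshifted_gt iMi (negbT sh_i) vi; lia.
- exact: disjMi vi vj.
Qed.

Lemma wrap_lower_exists : exists2 Mr, lower_matching Mi k Mr & k \in cover Mj.
Proof.
exists [set phi i | i in Mi]; last exact: wrap_k_in_cover_Mj.
split.
- apply/matchingP => _ _ v /imsetP[i iMi ->] /imsetP[j jMi ->] vi vj.
  by rewrite (wrap_phi_edge_inj iMi jMi vi vj).
- apply: card_in_imset => i j iMi jMi eq_phi.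
  by apply: (wrap_phi_edge_inj iMi jMi (v := phi i)); rewrite -?eq_phi edge_self.
- apply: (lex_lt_eseq_of_first (b := x0)).
  + by apply/imsetP; exists xL; rewrite // /phi /shifted xL_succ x0_val ifT // wrap_k_gt0.
  + by rewrite -xL_succ; apply: matching_ordS.
  + by move=> c; rewrite x0_val.
  + by exists xL; rewrite // x0_val; have := wrap_xL_last; lia.
- have [_ ppkMi] := wrap_last_even.
  have lt_pk : ord_pred k < k by rewrite ord_pred_gt0 ?ltn_predL wrap_k_gt0.
  apply/coverP; exists (ord_pred k); last by rewrite -{1}(ord_predK k) edge_ordS.
  by apply/imsetP; exists (ord_pred (ord_pred k)); rewrite // /phi /shifted ord_predK ifT.
apply/subsetP => v /coverP[_ /imsetP[i iMi ->]]; rewrite /phi in_setU1.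
case: ifP => sh_i vi; last by rewrite (mem_cover iMi vi) orbT.
have := wrap_shifted_le sh_i vi; rewrite leq_eqVlt => /orP[/eqP eq_vk | /below_k ->].
  by rewrite (val_inj eq_vk) eqxx.
by rewrite orbT.
Qed.

End WrapAround.

Lemma lexmin_first_uncovered n p (Mi Mj : {set 'I_n}) : 1 < n ->
  lexmin_rep n p (mono Mi) Mi -> is_matching Mj -> #|Mj| = p -> lex_lt (eseq Mj) (eseq Mi) ->
  exists2 k : 'I_n, k \notin cover Mi & forall v : 'I_n, v < k -> v \in cover Mi.
Proof.
move=> n_gt1 [mMi cardMi _ minMi] mMj cardMj lt_ji.
case: (pickP [pred v | v \notin cover Mi]) => [v v_free | all_cov].
  case: (@arg_minnP _ v [pred u | u \notin cover Mi] (@nat_of_ord n) v_free) => k /= k_free k_min.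
  by exists k => // u; apply: contraTT => u_free; rewrite -leqNgt k_min.
have cover_Mi : cover Mi = setT by apply/setP => v; have := all_cov v; rewrite !inE => /negbFE.
have cover_Mj : cover Mj = setT.
  by apply/eqP; rewrite eqEcard subsetT -cover_Mi !card_cover // cardMi cardMj leqnn.
have := minMi Mj mMj cardMj; rewrite /mono cover_Mi cover_Mj => /(_ erefl).
by move: lt_ji; rewrite lex_leE lex_ltE => /lt_geF ->.
Qed.

Lemma first_diff_wraps n (Mi Mj : {set 'I_n}) : 1 < n -> is_matching Mj ->
  #|Mj| = #|Mi| -> lex_lt (eseq Mj) (eseq Mi) ->
  (forall b, b \in Mj -> b \notin cover Mi -> n <= b.+1) ->
  exists x0 xL : 'I_n,
    [/\ (x0 : nat) = 0, ordS xL = x0, x0 \in Mj, xL \in Mi & {subset Mj <= cover Mi}].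
Proof.
move=> n_gt1 mMj cardMji lt_ji only_last.
have [b [bMj bMi b_min [a aMi lt_ba]]] := lex_lt_eseq_first cardMji lt_ji.
have lt_bn : b.+1 < n := leq_ltn_trans lt_ba (ltn_ord a).
have /coverP[i iMi] : b \in cover Mi.
  by apply: contraLR lt_bn => /(only_last b bMj); rewrite -leqNgt.
rewrite in_edge => /orP[/eqP eq_bi | /eqP def_b]; first by rewrite eq_bi iMi in bMi.
have i_last : i.+1 = n.
  have := ltn_ord i; rewrite leq_eqVlt => /orP[/eqP // | lt_in].
  have iMj : i \in Mj by rewrite b_min // def_b ordS_lt.
  by have := matching_ordS n_gt1 mMj iMj; rewrite -def_b bMj.
have b0 : (b : nat) = 0 by rewrite def_b ordS_last.
exists b, i; split => // x xMj; apply: contraT => x_free.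
have sx : ordS x = b.
  apply: ord_inj; rewrite b0 ordS_last //.
  by have := only_last x xMj x_free; have := ltn_ord x; lia.
by have := matching_ordS n_gt1 mMj xMj; rewrite sx bMj.
Qed.

Lemma left_ends_hit_edges n (A B : {set 'I_n}) : 1 < n -> is_matching A ->
  #|A| = #|B| -> {subset A <= cover B} -> forall b, b \in B -> (b \in A) || (ordS b \in A).
Proof.
move=> n_gt1 mA cardAB A_cov.
pose g x := if x \in B then x else ord_pred x.
have gB x : x \in A -> g x \in B.
  move/A_cov/coverP => [i iB]; rewrite /g in_edge; case: ifP => // xB.
  by case/orP => /eqP def_x; [rewrite def_x iB in xB | rewrite def_x ordSK].
have g_inj : {in A &, injective g}.
  have adj x y : x \in A -> y \in A -> x = ord_pred y -> False.
    by move=> xA yA def_x; have := matching_ordS n_gt1 mA xA; rewrite def_x ord_predK yA.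
  move=> x y xA yA; rewrite /g; case: ifP => _; case: ifP => _ //; last exact: ord_pred_inj.
    by move=> /(adj x y xA yA).
  by move=> /esym/(adj y x yA xA).
have img : [set g x | x in A] = B.
  apply/eqP; rewrite eqEcard card_in_imset // cardAB leqnn andbT.
  by apply/subsetP => _ /imsetP[x xA ->]; apply: gB.
move=> b; rewrite -img => /imsetP[x xA ->]; rewrite /g.
by case: ifP => _; rewrite ?xA // ord_predK xA orbT.
Qed.

Theorem lemma3p4 (n q : nat) :
  3 <= n -> 2 <= q -> q.-1 <= n./2 ->
  forall mi mj : mon n,
    min_gens (matching_gens n q.-1) mi ->
    min_gens (matching_gens n q.-1) mj ->
    gen_lt n q.-1 mj mi ->
    msubset (colon (principal mj) mi) (colon (Iq n q) mi) \/
    exists mr : mon n,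
      [/\ min_gens (matching_gens n q.-1) mr, gen_lt n q.-1 mr mi,
          (exists k : 'I_n, forall u, colon (principal mr) mi u <-> principal (mvar k) u) &
          msubset (colon (principal mj) mi) (colon (principal mr) mi)].
Proof.
(* The bound q.-1 <= n./2 is implied by the existence of a matching of size q.-1. *)
move=> n_ge3 q_ge2 _ mi mj _ _ [Mj [Mi [[mMj cardMj <- _] lexMi lt_ji]]].
have [mMi cardMi def_mi _] := lexMi; subst mi.
have n_gt1 : 1 < n by lia.
have cardMji : #|Mj| = #|Mi| by rewrite cardMj cardMi.
case: (pickP [pred b | [&& b \in Mj, b \notin cover Mi & b.+1 < n]]) =>
    [b /and3P[bMj b_free lt_bn] | no_inner].
  have [sb_cov | sb_free] := boolP (ordS b \in cover Mi).
    right; apply: (var_colon_witness_lower n_gt1 lexMi _ (mem_cover bMj (edge_self b)) b_free).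
    exact: lower_matching_swap.
  by left; apply: colon_Iq_free_edge bMj b_free sb_free; rewrite // ltnW.
right.
have only_last b : b \in Mj -> b \notin cover Mi -> n <= b.+1.
  by move=> bMj b_free; have := no_inner b; rewrite /= bMj b_free /= => /negbT; rewrite -leqNgt.
have [x0 [xL [x0_val xL_succ x0Mj xLMi Mj_cov]]] :=
  first_diff_wraps n_gt1 mMj cardMji lt_ji only_last.
have Mi_left := left_ends_hit_edges n_gt1 mMj cardMji Mj_cov.
have [k k_free below_k] := lexmin_first_uncovered n_gt1 lexMi mMj cardMj lt_ji.
have [Mr lowMr kMj] :=
  wrap_lower_exists n_gt1 mMi mMj x0_val xL_succ x0Mj xLMi Mi_left k_free below_k.
exact: var_colon_witness_lower n_gt1 lexMi lowMr kMj k_free.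
Qed.
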